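(* Let $m\ge1$ and let $X_1,X_2,\dots$ be i.i.d. random words in $\{0,1\}^m$, where word $\mathbf{w}_i$ has probability $P_i$ and the words are indexed so that $P_1\ge P_2\ge\dots\ge P_{2^m}$. Let $\mathbf{y}_1,\dots,\mathbf{y}_{2^m}$ be the distinct words of $\{0,1\}^m$ listed in order of nondecreasing cost, with $c_i=c(\mathbf{y}_i)$, and let $\phi$ be the direct shaping encoder (described in the context). Let $C_t=c(\phi(X_1,\dots,X_t))/t$, where $c(\phi(X_1,\dots,X_t))$ is the sum of the costs of the first $t$ output codewords. Then the asymptotic expected average cost satisfies $$C_\infty=\lim_{t\to\infty}E(C_t)=\sum_i P_ic_i.$$
   Context: Direct shaping code: the encoder maintains a list of all $2^m$ input words paired with frequency counts $n_k$ (initially all $0$, words ordered lexicographically), kept in nonincreasing order of counts. When input word $\mathbf{x}$ arrives, it is mapped to the output word $\mathbf{y}_k$ occupying the same position $k$ as $\mathbf{x}$ in the list; then the count of $\mathbf{x}$ is increased by one, from $n$ to $n+1$, and $\mathbf{x}$ is moved above all pairs with counts less than or equal to $n+1$. Costs: each codeword $\mathbf{y}$ has a cost $c(\mathbf{y})$ (e.g. for SLC flash, the number of $0$ symbols in $\mathbf{y}$), and the cost of a sequence of codewords is the sum of their costs. No channel errors are assumed. *)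

From HB Require Import structures.
From mathcomp Require Import all_boot all_order all_algebra.
From mathcomp Require Import all_classical all_reals all_analysis.

Set Implicit Arguments.
Unset Strict Implicit.
Unset Printing Implicit Defensive.

Import Order.TTheory GRing.Theory Num.Theory.
Local Open Scope ring_scope.

(* Words of {0,1}^m; false = 0, true = 1. *)
Notation word m := (m.-tuple bool).

Definition word0 (m : nat) : word m := [tuple of nseq m false].

Fixpoint lexle (u v : seq bool) : bool :=
  match u, v with
  | [::], _ => true
  | _ :: _, [::] => false
  | a :: u', b :: v' => (~~ a && b) || ((a == b) && lexle u' v')
  end.

Definition init_list (m : nat) : seq (word m) :=
  sort (fun u v : word m => lexle u v) (enum {: word m}).

Record ds_state (m : nat) := DSState {
  st_list : seq (word m);
  st_cnt : {ffun word m -> nat} }.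

Definition init_state (m : nat) : ds_state m :=
  DSState (init_list m) [ffun => 0%N].

(* Update after input word x: count of x goes from n to n+1, and x is moved
   above all pairs with count <= n+1. *)
Definition ds_step (m : nat) (st : ds_state m) (x : word m) : ds_state m :=
  let n1 := (st_cnt st x).+1 in
  let cnt' := [ffun w => if w == x then n1 else st_cnt st w] in
  let l' := rem x (st_list st) in
  let k := find (fun w => (cnt' w <= n1)%N) l' in
  DSState (take k l' ++ x :: drop k l') cnt'.

(* Positions (0-based) of the successive input words in the list at the time
   they arrive. *)
Fixpoint ds_positions (m : nat) (st : ds_state m) (s : seq (word m)) : seq nat :=
  match s with
  | [::] => [::]
  | x :: s' => index x (st_list st) :: ds_positions (ds_step st x) s'
  end.

(* Direct shaping encoder phi: the input word at position k is mapped to the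
   output word y_k, where ys = [y_1; ...; y_{2^m}] (0-based nth). *)
Definition ds_encode (m : nat) (ys : seq (word m)) (s : seq (word m)) : seq (word m) :=
  map (fun k => nth (word0 m) ys k) (ds_positions (init_state m) s).

Definition seq_cost (R : realType) (m : nat) (c : word m -> R) (s : seq (word m)) : R :=
  \sum_(y <- s) c y.

Definition expected_avg_cost (R : realType) (m : nat) (P c : word m -> R)
    (ys : seq (word m)) (t : nat) : R :=
  \sum_(s : t.-tuple (word m))
     (\prod_(x <- s) P x) * (seq_cost c (ds_encode ys s) / t%:R).

From HB Require Import structures.
From mathcomp Require Import all_boot all_order all_algebra.
From mathcomp Require Import all_classical all_reals all_analysis.
From mathcomp Require Import ring lra.

(* After an input prefix s, the encoder's list is sorted by nonincreasing
   counts [count_mem w s].  If every pair with P x > P y satisfies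
   count x > count y, the list is therefore also sorted by nonincreasing
   probability and the next output word has expected cost exactly
   \sum_i P_i c_i; otherwise the error is at most 2 \sum_w |c w|.
   Chebyshev's inequality for the i.i.d. sum of the increments
   1[z = x] - 1[z = y], whose mean P x - P y is positive, shows that each pair
   is misordered after t inputs with probability O(1/t).  Hence the expected
   cost of the (t+1)-st output tends to \sum_i P_i c_i, and so does its Cesaro
   mean E(C_t). *)

Set Implicit Arguments.
Unset Strict Implicit.
Unset Printing Implicit Defensive.

Import Order.TTheory GRing.Theory Num.Theory numFieldNormedType.Exports.
Local Open Scope ring_scope.
Local Open Scope classical_set_scope.

Lemma sorted_insert_at_find (T : Type) (r : rel T) (p : pred T) (x : T) (s : seq T) :
  transitive r -> sorted r s ->
  (forall u, ~~ p u -> r u x) -> (forall v, p v -> r x v) ->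
  sorted r (take (find p s) s ++ x :: drop (find p s) s).
Proof.
move=> r_tr; rewrite !(sorted_pairwise r_tr) => s_pw rNp rp.
move: s_pw; rewrite -[in pairwise _ s](cat_take_drop (find p s) s) pairwise_cat.
case/and3P=> r_take_drop pw_take pw_drop.
rewrite pairwise_cat /= allrel_consr r_take_drop pw_take pw_drop !andbT.
apply/andP; split.
  apply: (@sub_all _ (predC p)) => [u /rNp //|]; rewrite all_predC.
  by apply/negP => /find_ltn; rewrite ltnn.
move: pw_drop; case: findP => [_ | i lt_i p_i _]; first by rewrite drop_size.
rewrite (drop_nth x lt_i) /= => /andP[r_nth _].
rewrite rp //=; apply: sub_all r_nth => v /=.
exact: r_tr (rp _ (p_i x)).
Qed.

Section DirectShaping.
Variable m : nat.
Local Notation W := (word m).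

Definition ds_run (s : seq W) : ds_state m := foldl (@ds_step m) (init_state m) s.

Lemma ds_run_rcons s x : ds_run (rcons s x) = ds_step (ds_run s) x.
Proof. exact: foldl_rcons. Qed.

Lemma ds_positions_rcons (st : ds_state m) s x :
  ds_positions st (rcons s x) =
  rcons (ds_positions st s) (index x (st_list (foldl (@ds_step m) st s))).
Proof. by elim: s st => [|y s IHs] st //=; rewrite IHs. Qed.

Lemma st_cnt_ds_step (st : ds_state m) x w :
  st_cnt (ds_step st x) w = (st_cnt st w + (w == x))%N.
Proof. by rewrite ffunE; case: eqP => [->|_]; rewrite ?addn1 ?addn0. Qed.

Lemma st_cnt_ds_run s w : st_cnt (ds_run s) w = count_mem w s.
Proof.
elim/last_ind: s => [|s x IHs]; first by rewrite ffunE.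
by rewrite ds_run_rcons st_cnt_ds_step IHs -cats1 count_cat /= addn0 eq_sym.
Qed.

Lemma perm_ds_step (st : ds_state m) x :
  x \in st_list st -> perm_eq (st_list (ds_step st x)) (st_list st).
Proof.
move=> x_st; rewrite /= -cat1s perm_catCA /= cat_take_drop perm_sym.
exact: perm_to_rem.
Qed.

Lemma perm_ds_run s : perm_eq (st_list (ds_run s)) (enum {: W}).
Proof.
elim/last_ind: s => [|s x IHs]; first by rewrite /ds_run /= /init_list perm_sort.
have x_run : x \in st_list (ds_run s) by rewrite (perm_mem IHs) mem_enum.
by rewrite ds_run_rcons (perm_trans (perm_ds_step x_run)).
Qed.

Lemma sorted_ds_step (st : ds_state m) x :
  uniq (st_list st) ->
  sorted (fun u v => st_cnt st v <= st_cnt st u)%N (st_list st) ->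
  sorted (fun u v => st_cnt (ds_step st x) v <= st_cnt (ds_step st x) u)%N
    (st_list (ds_step st x)).
Proof.
move=> st_uniq st_sorted; set cnt' := st_cnt (ds_step st x).
have cnt'_tr : transitive (fun u v : W => cnt' v <= cnt' u)%N.
  by move=> v u w uv vw; apply: leq_trans vw uv.
have cnt'x : cnt' x = (st_cnt st x).+1 by rewrite /cnt' st_cnt_ds_step eqxx addn1.
apply: sorted_insert_at_find => // [|u|v]; rewrite /= -/cnt' ?cnt'x.
- apply: (sub_in_sorted (P := predC1 x)
    (e := fun u v => st_cnt st v <= st_cnt st u)%N).
  + move=> u v; rewrite !inE => /negPf ux /negPf vx.
    by rewrite /cnt' !st_cnt_ds_step ux vx !addn0.
  + by apply/allP => u; rewrite mem_rem_uniq // inE => /andP[].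
  + apply: subseq_sorted st_sorted; last exact: rem_subseq.
    by move=> v u w uv vw; apply: leq_trans vw uv.
- by rewrite -ltnNge => /ltnW.
- by [].
Qed.

Lemma sorted_ds_run s :
  sorted (fun u v => count_mem v s <= count_mem u s)%N (st_list (ds_run s)).
Proof.
have cntE s' : (fun u v => st_cnt (ds_run s') v <= st_cnt (ds_run s') u)%N =2
    (fun u v => count_mem v s' <= count_mem u s')%N.
  by move=> u v; rewrite !st_cnt_ds_run.
rewrite -(eq_sorted (cntE s)).
elim/last_ind: s => [|s x IHs]; first by apply/(sortedP (word0 m)) => i _; rewrite !ffunE.
rewrite ds_run_rcons; apply: sorted_ds_step => //.
by rewrite (perm_uniq (perm_ds_run s)) enum_uniq.
Qed.

End DirectShaping.

Section IidExpectation.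
Variables (R : realFieldType) (T : finType) (P : T -> R).
Hypothesis P_ge0 : forall x, 0 <= P x.
Hypothesis P_sum1 : \sum_x P x = 1.

Definition iid_expect (t : nat) (g : seq T -> R) : R :=
  \sum_(s : t.-tuple T) (\prod_(x <- s) P x) * g s.

Lemma iid_expect0 g : iid_expect 0 g = g [::].
Proof.
rewrite /iid_expect (eq_bigr (fun _ => (\prod_(x <- [::]) P x) * g [::])).
  by rewrite sumr_const card_tuple expn0 big_nil mul1r.
by move=> s _; rewrite tuple0.
Qed.

Lemma iid_expectS t g :
  iid_expect t.+1 g = \sum_x P x * iid_expect t (fun s => g (x :: s)).
Proof.
pose cons_tuple (p : T * t.-tuple T) := [tuple of p.1 :: p.2].
rewrite /iid_expect (reindex cons_tuple) /=; last first.
  exists (fun s : t.+1.-tuple T => (thead s, [tuple of behead s])).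
    by move=> [x s] _; congr pair; apply: val_inj.
  by move=> s _; rewrite [RHS]tuple_eta.
rewrite -(pair_bigA _ (fun x (s : t.-tuple T) =>
  (\prod_(y <- x :: s) P y) * g (x :: s))).
apply: eq_bigr => x _; rewrite mulr_sumr; apply: eq_bigr => s _.
by rewrite big_cons mulrA.
Qed.

Lemma iid_expectSr t g :
  iid_expect t.+1 g = iid_expect t (fun s => \sum_x P x * g (rcons s x)).
Proof.
elim: t g => [|t IHt] g.
  by rewrite iid_expectS iid_expect0; under eq_bigr do rewrite iid_expect0.
by rewrite !iid_expectS; under eq_bigr do rewrite IHt.
Qed.

Lemma eq_iid_expect t (f g : seq T -> R) :
  (forall s : t.-tuple T, f s = g s) -> iid_expect t f = iid_expect t g.
Proof. by move=> fg; apply: eq_bigr => s _; rewrite fg. Qed.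

Lemma iid_expectD t (f g : seq T -> R) :
  iid_expect t (fun s => f s + g s) = iid_expect t f + iid_expect t g.
Proof. by rewrite -big_split; apply: eq_bigr => s _; rewrite mulrDr. Qed.

Lemma iid_expectZ t k (f : seq T -> R) :
  iid_expect t (fun s => k * f s) = k * iid_expect t f.
Proof. by rewrite mulr_sumr; apply: eq_bigr => s _; rewrite mulrCA. Qed.

Lemma iid_expect_sum t (I : finType) (F : I -> seq T -> R) :
  iid_expect t (fun s => \sum_i F i s) = \sum_i iid_expect t (F i).
Proof. by rewrite exchange_big; apply: eq_bigr => s _; rewrite mulr_sumr. Qed.

Lemma iid_expect_cst t k : iid_expect t (fun _ => k) = k.
Proof.
elim: t => [|t IHt]; first by rewrite iid_expect0.
by rewrite iid_expectS; under eq_bigr do rewrite IHt; rewrite -mulr_suml P_sum1 mul1r.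
Qed.

Lemma ler_iid_expect t (f g : seq T -> R) :
  (forall s : t.-tuple T, f s <= g s) -> iid_expect t f <= iid_expect t g.
Proof.
by move=> fg; apply: ler_sum => s _; rewrite ler_wpM2l ?prodr_ge0.
Qed.

Lemma iid_expect_norm t (f : seq T -> R) :
  `|iid_expect t f| <= iid_expect t (fun s => `|f s|).
Proof.
apply: le_trans (ler_norm_sum _ _ _) _; apply: ler_sum => s _.
by rewrite normrM ger0_norm ?prodr_ge0.
Qed.

Definition mean (f : T -> R) : R := \sum_x P x * f x.

Definition variance (f : T -> R) : R := \sum_x P x * (f x - mean f) ^+ 2.

Definition centered_sum (f : T -> R) (s : seq T) : R := \sum_(x <- s) (f x - mean f).

Lemma centered_sumE f s :
  centered_sum f s = \sum_(x <- s) f x - (size s)%:R * mean f.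
Proof.
by rewrite /centered_sum sumrB big_const_seq count_predT iter_addr_0 mulr_natl.
Qed.

Lemma mean_centered f : \sum_x P x * (f x - mean f) = 0.
Proof.
under eq_bigr do rewrite mulrBr.
by rewrite sumrB -mulr_suml P_sum1 mul1r subrr.
Qed.

Lemma iid_expect_centered_sum f t : iid_expect t (centered_sum f) = 0.
Proof.
elim: t => [|t IHt]; first by rewrite iid_expect0 /centered_sum big_nil.
rewrite iid_expectS -[RHS](mean_centered f); apply: eq_bigr => x _.
rewrite (eq_iid_expect (g := fun s => (f x - mean f) + centered_sum f s)).
  by rewrite iid_expectD iid_expect_cst IHt addr0.
by move=> s; rewrite /centered_sum big_cons.
Qed.

Lemma iid_expect_centered_sum_sqr f t :
  iid_expect t (fun s => centered_sum f s ^+ 2) = t%:R * variance f.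
Proof.
elim: t => [|t IHt]; first by rewrite iid_expect0 /centered_sum big_nil expr0n mul0r.
rewrite iid_expectS.
transitivity (\sum_x P x * ((f x - mean f) ^+ 2 + t%:R * variance f)).
  apply: eq_bigr => x _; congr (_ * _).
  rewrite (eq_iid_expect (g := fun s => (f x - mean f) ^+ 2 +
    ((f x - mean f) *+ 2 * centered_sum f s + centered_sum f s ^+ 2))).
    by rewrite !iid_expectD iid_expect_cst iid_expectZ iid_expect_centered_sum IHt mulr0 add0r.
  by move=> s; rewrite /centered_sum big_cons; ring.
under eq_bigr do rewrite mulrDr.
by rewrite big_split /= -mulr_suml P_sum1 mul1r -natr1 mulrDl mul1r addrC.
Qed.

Lemma chebyshev_centered_sum f t (a : R) : 0 < a -> (0 < t)%N ->
  iid_expect t (fun s => ((t%:R * a <= `|centered_sum f s|)%R)%:R)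
    <= variance f / (a ^+ 2 * t%:R).
Proof.
move=> a_gt0 t_gt0; have ta_gt0 : 0 < t%:R * a by rewrite mulr_gt0 ?ltr0n.
apply: (@le_trans _ _ (iid_expect t (fun s => centered_sum f s ^+ 2 / (t%:R * a) ^+ 2))).
  apply: ler_iid_expect => s.
  have [dev|_] := boolP (t%:R * a <= `|centered_sum f s|); last first.
    by rewrite mulr0n divr_ge0 ?sqr_ge0.
  rewrite mulr1n ler_pdivlMr ?exprn_gt0 // mul1r -(real_normK (num_real (centered_sum f s))).
  by rewrite ler_sqr ?nnegrE ?normr_ge0 ?(ltW ta_gt0).
rewrite (eq_iid_expect (g := fun s => ((t%:R * a) ^+ 2)^-1 * centered_sum f s ^+ 2)).
  rewrite iid_expectZ iid_expect_centered_sum_sqr.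
  suff -> : ((t%:R * a) ^+ 2)^-1 * (t%:R * variance f) = variance f / (a ^+ 2 * t%:R).
    by rewrite lexx.
  by field; rewrite !gt_eqF ?ltr0n.
by move=> s; rewrite mulrC.
Qed.

Lemma chebyshev_count_le x y t : P y < P x -> (0 < t)%N ->
  iid_expect t (fun s => (count_mem x s <= count_mem y s)%:R)
    <= variance (fun z => (z == x)%:R - (z == y)%:R) / ((P x - P y) ^+ 2 * t%:R).
Proof.
move=> Pyx t_gt0; set f := fun z : T => (z == x)%:R - (z == y)%:R.
have mean_pred1 w : \sum_z P z * (z == w)%:R = P w.
  by under eq_bigr do rewrite mulr_natr mulrb; rewrite -big_mkcond big_pred1_eq.
have mean_f : mean f = P x - P y.
  by rewrite /mean; under eq_bigr do rewrite mulrBr; rewrite sumrB !mean_pred1.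
have sum_f s : \sum_(z <- s) f z = (count_mem x s)%:R - (count_mem y s)%:R.
  elim: s => [|z s IHs]; first by rewrite big_nil subrr.
  by rewrite big_cons IHs /= !natrD /f; ring.
apply: le_trans (chebyshev_centered_sum f (a := P x - P y) _ _) => //; last by rewrite subr_gt0.
apply: ler_iid_expect => s; rewrite centered_sumE sum_f size_tuple mean_f.
have [cnt_le|] := boolP (count_mem x s <= count_mem y s)%N; last by rewrite mulr0n ler0n.
rewrite mulr1n ler1n lt0b ler_normr; apply/orP; right.
by move: cnt_le; rewrite -(ler_nat R); lra.
Qed.

End IidExpectation.

Lemma big_zip_index (V : nmodType) (T U : eqType) (F : T -> U -> V)
    (l : seq T) (us : seq U) (u0 : U) :
  uniq l -> size us = size l ->
  \sum_(x <- l) F x (nth u0 us (index x l)) = \sum_(p <- zip l us) F p.1 p.2.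
Proof.
elim: l us => [|a l IHl] [|u us] //=; rewrite ?big_nil // => /andP[a_l l_uniq] [size_us].
rewrite !big_cons eqxx -IHl //; congr (_ + _); apply: eq_big_seq => x x_l /=.
by case: eqP x_l a_l => // ->->.
Qed.

Lemma big_zip_mapl (V : nmodType) (S T U : Type) (f : S -> T) (F : T -> U -> V)
    (l : seq S) (us : seq U) :
  \sum_(p <- zip (map f l) us) F p.1 p.2 = \sum_(p <- zip l us) F (f p.1) p.2.
Proof.
by elim: l us => [|a l IHl] [|u us] //=; rewrite ?big_nil // !big_cons IHl.
Qed.

Lemma big_zip_sorted_perm (R : realDomainType) (V : nmodType) (T : eqType) (U : Type)
    (P : T -> R) (F : R -> U -> V) (l l' : seq T) (us : seq U) :
  perm_eq l l' ->
  sorted (fun u v => P v <= P u) l -> sorted (fun u v => P v <= P u) l' ->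
  \sum_(p <- zip l us) F (P p.1) p.2 = \sum_(p <- zip l' us) F (P p.1) p.2.
Proof.
move=> ll' l_sorted l'_sorted; rewrite -!(big_zip_mapl P F); congr (\sum_(p <- zip _ us) _).
apply: (@sorted_eq _ (fun a b : R => b <= a)).
- by move=> b a d ab bd; apply: le_trans bd ab.
- by move=> a b /andP[ab ba]; apply/le_anti/andP.
- by rewrite sorted_map.
- by rewrite sorted_map.
- exact: perm_map.
Qed.

Lemma cvgr_dist_le_divn (R : archiRealFieldType) (u : R ^nat) (l C : R) :
  (forall n, (0 < n)%N -> `|u n - l| <= C / n%:R) -> u @ \oo --> l.
Proof.
move=> u_near; apply/cvgrPdist_le => e e_gt0.
exists (Num.truncn (C / e)).+1 => // n /= n_large.
have n_gt0 : (0 < n)%N by apply: leq_trans n_large.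
rewrite distrC; apply: le_trans (u_near n n_gt0) _.
rewrite ler_pdivrMr ?ltr0n // -ler_pdivrMl // ltW //.
by rewrite mulrC; apply: lt_le_trans (truncnS_gt _) _; rewrite ler_nat.
Qed.

Section ExpectedCost.
Variables (R : realType) (m : nat) (P c : word m -> R) (ws ys : seq (word m)).
Hypothesis P_ge0 : forall w, 0 <= P w.
Hypothesis P_sum1 : \sum_w P w = 1.
Hypothesis hws : perm_eq ws (enum {: word m}).
Hypothesis hwsP : sorted (fun u v => P v <= P u) ws.
Hypothesis hys : perm_eq ys (enum {: word m}).
Local Notation W := (word m).

Definition next_cost (l : seq W) : R :=
  \sum_x P x * c (nth (word0 m) ys (index x l)).

Definition asymptotic_cost : R := \sum_(p <- zip ws ys) P p.1 * c p.2.

Lemma next_cost_zip l :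
  perm_eq l (enum {: W}) -> next_cost l = \sum_(p <- zip l ys) P p.1 * c p.2.
Proof.
move=> l_enum; have l_uniq : uniq l by rewrite (perm_uniq l_enum) enum_uniq.
have size_ys : size ys = size l by rewrite (perm_size hys) (perm_size l_enum).
rewrite -(big_zip_index (fun x y => P x * c y) (word0 m) l_uniq size_ys).
by rewrite (perm_big _ l_enum) big_enum; apply: eq_bigl.
Qed.

Lemma next_cost_sorted l : perm_eq l (enum {: W}) ->
  sorted (fun u v => P v <= P u) l -> next_cost l = asymptotic_cost.
Proof.
move=> l_enum l_sorted; rewrite next_cost_zip //.
apply: (big_zip_sorted_perm (fun r y => r * c y)) => //.
by rewrite (perm_trans l_enum) // perm_sym.
Qed.

Definition cost_bound : R := \sum_w `|c w|.

Lemma norm_next_cost_le l : `|next_cost l| <= cost_bound.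
Proof.
apply: le_trans (ler_norm_sum _ _ _) _.
rewrite -[cost_bound]mul1r -P_sum1 mulr_suml; apply: ler_sum => x _.
rewrite normrM ger0_norm // ler_wpM2l // /cost_bound.
by rewrite (bigD1 (nth (word0 m) ys (index x l))) //= lerDl sumr_ge0.
Qed.

Definition inversions (s : seq W) : R :=
  \sum_x \sum_y ((P y < P x) && (count_mem x s <= count_mem y s)%N)%:R.

Lemma inversions_ge1 s x y : P y < P x ->
  (count_mem x s <= count_mem y s)%N -> 1 <= inversions s.
Proof.
move=> Pyx cnt_le; rewrite /inversions (bigD1 x) //= (bigD1 y) //= Pyx cnt_le.
by rewrite mulr1n -addrA lerDl addr_ge0 ?sumr_ge0 // => *; rewrite ?sumr_ge0.
Qed.

Lemma sorted_prob_ds_run s :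
  (forall x y, P y < P x -> (count_mem y s < count_mem x s)%N) ->
  sorted (fun u v => P v <= P u) (st_list (ds_run s)).
Proof.
move=> cnt_lt; apply: sub_sorted (sorted_ds_run s) => u v /= cnt_vu.
by rewrite leNgt; apply/negP => /cnt_lt; rewrite ltnNge cnt_vu.
Qed.

Lemma dist_next_cost_ds_run s :
  `|next_cost (st_list (ds_run s)) - asymptotic_cost| <= 2 * cost_bound * inversions s.
Proof.
have bound_ge0 : 0 <= cost_bound by rewrite sumr_ge0.
have [/forallP sorted_cnt|] :=
  boolP [forall x, forall y, (P y < P x) ==> (count_mem y s < count_mem x s)%N].
  have run_sorted : sorted (fun u v => P v <= P u) (st_list (ds_run s)).
    by apply: sorted_prob_ds_run => x y; move/forallP: (sorted_cnt x) => /(_ y)/implyP.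
  rewrite next_cost_sorted ?perm_ds_run // subrr normr0 !mulr_ge0 //.
  by apply: sumr_ge0 => x _; apply: sumr_ge0 => y _; rewrite ler0n.
rewrite negb_forall => /existsP[x]; rewrite negb_forall => /existsP[y].
rewrite negb_imply -leqNgt => /andP[Pyx cnt_le].
apply: le_trans (ler_normB _ _) _.
rewrite -(next_cost_sorted hws hwsP) mulr2n mulrDl mul1r.
apply: (@le_trans _ _ (cost_bound + cost_bound)); first by rewrite lerD ?norm_next_cost_le.
by rewrite ler_peMr ?addr_ge0 // (inversions_ge1 Pyx cnt_le).
Qed.

Definition inversion_rate : R := \sum_x \sum_y
  ((P y < P x)%R)%:R * (variance P (fun z => (z == x)%:R - (z == y)%:R) / (P x - P y) ^+ 2).

Lemma iid_expect_inversions t : (0 < t)%N ->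
  iid_expect P t inversions <= inversion_rate / t%:R.
Proof.
move=> t_gt0; rewrite iid_expect_sum mulr_suml; apply: ler_sum => x _.
rewrite iid_expect_sum mulr_suml; apply: ler_sum => y _.
have [Pyx|_] := boolP (P y < P x); last by rewrite iid_expect_cst // !mul0r.
by rewrite mul1r -mulrA -invfM; apply: chebyshev_count_le.
Qed.

Definition expected_next_cost (t : nat) : R :=
  iid_expect P t (fun s => next_cost (st_list (ds_run s))).

Lemma dist_expected_next_cost_le t : (0 < t)%N ->
  `|expected_next_cost t - asymptotic_cost| <= 2 * cost_bound * inversion_rate / t%:R.
Proof.
move=> t_gt0.
have -> : expected_next_cost t - asymptotic_cost =
    iid_expect P t (fun s => next_cost (st_list (ds_run s)) - asymptotic_cost).
  by rewrite iid_expectD iid_expect_cst.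
apply: le_trans (iid_expect_norm P_ge0 _ _) _.
apply: (@le_trans _ _ (iid_expect P t (fun s => 2 * cost_bound * inversions s))).
  by apply: (ler_iid_expect P_ge0) => s; apply: dist_next_cost_ds_run.
rewrite iid_expectZ -[_ * inversion_rate / _]mulrA ler_wpM2l ?mulr_ge0 ?sumr_ge0 //.
exact: iid_expect_inversions.
Qed.

Lemma seq_cost_ds_encode_rcons s x :
  seq_cost c (ds_encode ys (rcons s x)) =
  seq_cost c (ds_encode ys s) + c (nth (word0 m) ys (index x (st_list (ds_run s)))).
Proof.
by rewrite /seq_cost /ds_encode ds_positions_rcons map_rcons -cats1 big_cat big_seq1.
Qed.

Lemma iid_expect_seq_cost t :
  iid_expect P t (fun s => seq_cost c (ds_encode ys s)) = \sum_(i < t) expected_next_cost i.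
Proof.
elim: t => [|t IHt]; first by rewrite iid_expect0 big_ord0 /seq_cost /ds_encode big_nil.
rewrite iid_expectSr big_ord_recr /= -IHt -iid_expectD; apply: eq_iid_expect => s.
under eq_bigr do rewrite seq_cost_ds_encode_rcons mulrDr.
by rewrite big_split /= -mulr_suml P_sum1 mul1r.
Qed.

Lemma expected_avg_cost_mean t :
  expected_avg_cost P c ys t.+1 = arithmetic_mean expected_next_cost t.
Proof.
have -> : expected_avg_cost P c ys t.+1 =
    iid_expect P t.+1 (fun s => seq_cost c (ds_encode ys s)) / t.+1%:R.
  by rewrite /iid_expect mulr_suml; apply: eq_bigr => s _; rewrite mulrA.
by rewrite iid_expect_seq_cost /arithmetic_mean /series /= big_mkord mulrC.
Qed.

End ExpectedCost.

Theorem theorem4 (R : realType) (m : nat) (hm : (1 <= m)%N)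
  (P c : word m -> R)
  (P_ge0 : forall w, 0 <= P w) (P_sum1 : \sum_(w : word m) P w = 1)
  (ws ys : seq (word m))
  (hws : perm_eq ws (enum {: word m}))
  (hwsP : sorted (fun u v => P v <= P u) ws)
  (hys : perm_eq ys (enum {: word m}))
  (hysc : sorted (fun u v => c u <= c v) ys) :
  expected_avg_cost P c ys t @[t --> \oo] -->
    \sum_(p <- zip ws ys) P p.1 * c p.2.
Proof.
rewrite -cvg_shiftS.
have -> : [sequence expected_avg_cost P c ys t.+1]_t =
    arithmetic_mean (expected_next_cost P c ys).
  by apply/funext => t; apply: expected_avg_cost_mean.
apply: cesaro; apply: cvgr_dist_le_divn => t t_gt0.
exact: dist_expected_next_cost_le.
Qed.
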